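(* Let $w \in \mathrm{GF}(2^7)\setminus\{0,1\}$, let $\sqrt{w}$ denote the unique square root of $w$ in $\mathrm{GF}(2^7)$, and let $\sigma$ be a non-trivial field automorphism of $\mathrm{GF}(2^7)$, say $\sigma: y\mapsto y^{2^k}$ with $1\le k\le 6$. For $i\ge 1$ write $\sqrt{w}^{-(\sigma^i+\cdots+\sigma^2+\sigma)}$ for the element $\sqrt{w}^{-(2^{ki}+\cdots+2^{2k}+2^{k})}$. Then the set \[ \{0,1,\sqrt{w}^{-\sigma}, \sqrt{w}^{-(\sigma^2+\sigma)}, \sqrt{w}^{-(\sigma^3+\sigma^2+\sigma)},\dots,\sqrt{w}^{-(\sigma^6+\cdots+\sigma^2+\sigma)}\} \] can be written as the set $\{0,1,x,x^3,x^7,x^{15},x^{31},x^{63}\}$, where $x$ is one of the elements $\sqrt{w}^{-(\sigma^i+\cdots+\sigma)}$, $1\le i\le 6$. *)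

From HB Require Import structures.
From mathcomp Require Import all_boot all_order all_algebra all_field.
Set Implicit Arguments. Unset Strict Implicit. Unset Printing Implicit Defensive.
Import GRing.Theory.
Local Open Scope ring_scope.

Definition sigma_exp (k i : nat) : nat := (\sum_(1 <= j < i.+1) 2 ^ (k * j))%N.

Definition sqrt_pow (F : fieldType) (r : F) (k i : nat) : F :=
  (r ^+ sigma_exp k i)^-1.

From HB Require Import structures.
From mathcomp Require Import all_boot all_order all_algebra all_field.
From mathcomp Require Import ring zify.
Set Implicit Arguments. Unset Strict Implicit. Unset Printing Implicit Defensive.
Import GRing.Theory.
Local Open Scope ring_scope.

(* Put b = sqrt(w)^-1, so that b^127 = 1 and the i-th element of the set is
   b^(e_i) with e_i = c + c^2 + ... + c^i, c = 2^k, computed in F_127.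
   Since c^7 = 1, e_i depends only on i mod 7, and geometric summation gives
   (c - 1) e_i = c (c^i - 1).  As k is invertible mod 7, some 1 <= t <= 6 has
   c^t = 2, i.e. sigma^t is the Frobenius; then e_t (2^m - 1) = e_(t m),
   so x = b^(e_t) satisfies x^(2^m - 1) = b^(e_(t m)), and m |-> t m permutes
   the nonzero residues mod 7. *)

Definition geom_sum (R : nzSemiRingType) (c : R) (i : nat) : R :=
  \sum_(1 <= j < i.+1) c ^+ j.

Lemma geom_sumE (R : comNzRingType) (c : R) (i : nat) :
  (c - 1) * geom_sum c i = c ^+ i.+1 - c.
Proof.
rewrite /geom_sum big_add1 /= big_mkord.
under eq_bigr do rewrite exprS.
by rewrite -mulr_sumr mulrCA -subrX1 mulrBr mulr1 exprS.
Qed.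

Section GeometricSum.
Variables (R : idomainType) (c : R).
Hypothesis c_neq1 : c != 1.

Lemma geom_sum_mod (n i : nat) : c ^+ n = 1 ->
  geom_sum c (i %% n) = geom_sum c i.
Proof.
move=> cn1; have c1 : c - 1 != 0 by rewrite subr_eq0.
apply: (mulfI c1); by rewrite !geom_sumE !exprS (expr_mod _ cn1).
Qed.

Lemma geom_sum_mul (t m : nat) :
  geom_sum c t * ((c ^+ t) ^+ m - 1) = (c ^+ t - 1) * geom_sum c (t * m).
Proof.
have c1 : c - 1 != 0 by rewrite subr_eq0.
apply: (mulfI c1); rewrite [LHS]mulrA [RHS]mulrCA !geom_sumE !exprS -exprM; ring.
Qed.

End GeometricSum.

Lemma modn_inv_exists (k n : nat) : (1 < n)%N -> (0 < k)%N -> coprime k n ->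
  exists2 t, (0 < t < n)%N & (k * t = 1 %[mod n])%N.
Proof.
move=> n_gt1 k_gt0 co_kn; have [s q def_s _] := egcdnP n k_gt0.
have ks1 : (k * s = 1 %[mod n])%N.
  by rewrite mulnC def_s (eqP co_kn) -modnDml modnMl add0n.
exists (s %% n)%N; last by rewrite modnMmr.
rewrite ltn_pmod ?(ltnW n_gt1) // andbT lt0n; apply/eqP => s0.
by move: ks1; rewrite -modnMmr s0 muln0 mod0n modn_small.
Qed.

Lemma modn_neq0_succ (n u : nat) : (0 < n)%N -> (u %% n != 0)%N ->
  exists m : 'I_n.-1, (u %% n = m.+1)%N.
Proof.
move=> n_gt0 u_n0; have lt_u : ((u %% n).-1 < n.-1)%N.
  by have := ltn_pmod u n_gt0; lia.
by exists (Ordinal lt_u) => /=; lia.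
Qed.

Section PeriodicImage.
Variables (T : finType) (f : nat -> T) (n : nat).
Hypotheses (n_gt0 : (0 < n)%N) (f_mod : forall i, f (i %% n)%N = f i).

Lemma periodic_imset_mul (s t : nat) : (s * t = 1 %[mod n])%N ->
  [set f j.+1 | j : 'I_n.-1] = [set f (t * j.+1)%N | j : 'I_n.-1].
Proof.
move=> st1.
have cancel_st x : (t * (s * x) = x %[mod n])%N.
  by rewrite mulnA [(t * s)%N]mulnC -modnMml st1 modnMml mul1n.
have cancel_ts x : (s * (t * x) = x %[mod n])%N.
  by rewrite mulnA -modnMml st1 modnMml mul1n.
have succ_n0 (j : 'I_n.-1) : (j.+1 %% n != 0)%N.
  by rewrite modn_small //; have := ltn_ord j; lia.
apply/eqP; rewrite eqEsubset; apply/andP; split; apply/subsetP=> _ /imsetP[j _ ->].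
- have [|m um] := @modn_neq0_succ n (s * j.+1) n_gt0.
    by apply: contra (succ_n0 j) => /eqP u0; rewrite -cancel_st -modnMmr u0 muln0 mod0n.
  apply/imsetP; exists m => //.
  by rewrite -um -[RHS]f_mod modnMmr cancel_st f_mod.
- have [|m um] := @modn_neq0_succ n (t * j.+1) n_gt0.
    by apply: contra (succ_n0 j) => /eqP u0; rewrite -cancel_ts -modnMmr u0 muln0 mod0n.
  by apply/imsetP; exists m; rewrite // -um f_mod.
Qed.

End PeriodicImage.

Lemma expr_Fp_nat (R : pzSemiRingType) (p n : nat) (z : R) :
  prime p -> z ^+ p = 1 -> z ^+ (n%:R : 'F_p) = z ^+ n.
Proof. by move=> p_pr zp1; rewrite val_Fp_nat // expr_mod. Qed.

Section SqrtPow.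
Variables (F : finFieldType) (r : F) (k : nat).
Hypotheses (hF : #|F| = 128%N) (r_neq0 : r != 0) (hk : (1 <= k <= 6)%N).

(* The exponents of r^-1 only matter modulo 127, so they are computed in F_127. *)
Let c : 'F_127 := (2 ^ k)%:R.

Let prime127 : prime 127. Proof. by []. Qed.

Let two_pow7 : (2 : 'F_127) ^+ 7 = 1. Proof. by apply/eqP. Qed.

Let c_neq1 : c != 1.
Proof.
have x_bounds : (2 <= 2 ^ k <= 64)%N by rewrite -[2%N]/(2 ^ 1)%N -[64%N]/(2 ^ 6)%N !leq_exp2l.
change ((2 ^ k)%:R != 1%:R :> 'F_127); move: (2 ^ k)%N x_bounds => x x_bounds.
apply/eqP => /(congr1 (@nat_of_ord _)); rewrite !(val_Fp_nat prime127).
by rewrite !modn_small; lia.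
Qed.

Let c_pow7 : c ^+ 7 = 1.
Proof. by rewrite /c natrX -exprM mulnC exprM two_pow7 expr1n. Qed.

Let c_pow_inv (t : nat) : (k * t = 1 %[mod 7])%N -> c ^+ t = 2.
Proof. by move=> kt1; rewrite /c natrX -exprM -(expr_mod _ two_pow7) kt1 expr1. Qed.

Let inv_r_pow127 : r^-1 ^+ 127 = 1.
Proof.
have r127 : r ^+ 127 = 1 by apply: (mulIf r_neq0); rewrite mul1r -exprSr -hF expf_card.
by rewrite exprVn r127 invr1.
Qed.

Let expr_inv_r_Fp (a b : nat) : a%:R = b%:R :> 'F_127 -> r^-1 ^+ a = r^-1 ^+ b.
Proof.
move=> eq_ab; rewrite -(expr_Fp_nat a prime127 inv_r_pow127).
by rewrite -(expr_Fp_nat b prime127 inv_r_pow127) eq_ab.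
Qed.

Let sigma_exp_Fp (i : nat) : (sigma_exp k i)%:R = geom_sum c i.
Proof. by rewrite natr_sum; apply: eq_bigr => j _; rewrite expnM natrX. Qed.

Lemma sqrt_pow_mod (i : nat) : sqrt_pow r k (i %% 7) = sqrt_pow r k i.
Proof.
by rewrite /sqrt_pow -!exprVn; apply: expr_inv_r_Fp; rewrite !sigma_exp_Fp geom_sum_mod.
Qed.

Lemma sqrt_pow_mul (t m : nat) : (k * t = 1 %[mod 7])%N ->
  sqrt_pow r k t ^+ (2 ^ m - 1) = sqrt_pow r k (t * m).
Proof.
move=> kt1; rewrite /sqrt_pow -!exprVn -exprM; apply: expr_inv_r_Fp.
have two_sub1 : (2 : 'F_127) - 1 = 1 by apply/eqP.
have pow2m : (2 ^ m)%:R = (c ^+ t) ^+ m :> 'F_127 by rewrite (c_pow_inv kt1) natrX.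
rewrite natrM natrB; last by rewrite expn_gt0.
rewrite pow2m !sigma_exp_Fp (geom_sum_mul c_neq1).
by rewrite (c_pow_inv kt1) two_sub1 mul1r.
Qed.

End SqrtPow.

Theorem lemma5 (F : finFieldType) (hF : #|F| = 128%N)
  (w r : F) (hw0 : w != 0) (hw1 : w != 1) (hr : r ^+ 2 = w)
  (k : nat) (hk : (1 <= k <= 6)%N) :
  exists2 i : nat, (1 <= i <= 6)%N &
    0 |: (1 |: [set sqrt_pow r k j.+1 | j : 'I_6])
    = 0 |: (1 |: [set (sqrt_pow r k i) ^+ (2 ^ j.+1 - 1) | j : 'I_6]).
Proof.
have r_neq0 : r != 0 by apply: contraNneq hw0 => r0; rewrite -hr r0 expr0n.
have /andP[k_gt0 k_le6] := hk.
have co_k7 : coprime k 7 by rewrite coprime_sym prime_coprime // gtnNdvd.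
have [t /andP[t_gt0 t_lt7] kt1] := modn_inv_exists (isT : 1 < 7)%N k_gt0 co_k7.
exists t; first by rewrite t_gt0 -ltnS.
congr (_ |: (_ |: _)).
rewrite (periodic_imset_mul (isT : 0 < 7)%N (sqrt_pow_mod hF r_neq0 hk) kt1).
by apply: eq_imset => j; rewrite sqrt_pow_mul.
Qed.
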